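(* Let $(X,\mathcal T,P,\leq,\{\sigma_x:x\in X\})$ be a $p$-symmetrically typed topological space for a type $p\in P$, and assume $\sigma$ has least $p$-neighborhood. Then for every $x\in X$: (1) for every $y\in X$, $y\in p\vdash CL_1(\{x\})$ iff $x\in p\vdash CL_1(\{y\})$; (2) $p\vdash C(x)=p\vdash tr(\{x\})$; (3) for every $y\in p\vdash tr(\{x\})$, $p\vdash tr(\{x\})=p\vdash tr(\{y\})$.
   Context: A typed topological space $(X,\mathcal T,P,\leq,\{\sigma_x:x\in X\})$ consists of a topological space $(X,\mathcal T)$, a partially ordered set $(P,\leq)$ of types, and for each $x\in X$ a partial function $\sigma_x:\{O\in\mathcal T:x\in O\}\to P$ such that for all $U,V$ in its domain, $\sigma_x(U)\leq\sigma_x(V)$ iff $U\subseteq V$. $U$ is a type-$p$ neighborhood of $x$ ($p\vdash U(x)$) if $U$ is in the domain of $\sigma_x$ and $\sigma_x(U)=p$. $x$ is a $p$-accumulation point of $A$ if every type-$p$ neighborhood of $x$ meets $A$. $p\vdash CL_1(A)=A\cup\{p\text{-accumulation points of }A\}$, $p\vdash CL_n(A)=p\vdash CL_1(p\vdash CL_{n-1}(A))$, $p\vdash tr(A)=\bigcup_{n\ge1}p\vdash CL_n(A)$. $\sigma$ has least $p$-neighborhood if every $x$ has a type-$p$ neighborhood $p\vdash U_{min}(x)$ contained in every type-$p$ neighborhood of $x$. $X$ is $p$-symmetrically typed if for any $x,y\in X$ such that $y\notin U$ for some type-$p$ neighborhood $U$ of $x$, there is a type-$p$ neighborhood $V$ of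 $y$ with $x\notin V$. A set $A$ is type-$p$-connected if there do not exist families of type-$p$ neighborhoods $\{p\vdash U(x_i):i\in I\}$, $\{p\vdash U(x_j):j\in J\}$ with $I,J\neq\emptyset$, $A=\{x_i:i\in I\}\cup\{x_j:j\in J\}$ and $\bigcup_{i\in I}U(x_i)\cap\bigcup_{j\in J}U(x_j)=\emptyset$. $p\vdash C(x)$ is the union of all type-$p$-connected sets containing $x$. *)

From HB Require Import structures.
From mathcomp Require Import all_boot all_order.
From mathcomp Require Import all_classical topology.
Set Implicit Arguments. Unset Strict Implicit. Unset Printing Implicit Defensive.
Local Open Scope classical_set_scope.
Local Open Scope order_scope.

Section Typed.
Context {d : Order.disp_t} {X : topologicalType} {P : porderType d}.
(* sigma x is the partial function sigma_x : {O open | x \in O} -> P,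
   encoded as an option-valued function on all subsets of X. *)
Variable sigma : X -> set X -> option P.

Definition typed_space : Prop :=
  (forall x U q, sigma x U = Some q -> open U /\ U x) /\
  (forall x U V q r, sigma x U = Some q -> sigma x V = Some r ->
      (q <= r <-> U `<=` V)).

Definition type_nbhd (p : P) (x : X) (U : set X) : Prop := sigma x U = Some p.

Definition p_acc_point (p : P) (A : set X) (x : X) : Prop :=
  forall U, type_nbhd p x U -> U `&` A !=set0.

Definition CL1 (p : P) (A : set X) : set X := A `|` p_acc_point p A.

(* CLn p n A = p |- CL_n(A) for n >= 1 (CLn p 0 A = A) *)
Definition CLn (p : P) (n : nat) (A : set X) : set X := iter n (CL1 p) A.

Definition tr (p : P) (A : set X) : set X :=
  [set y | exists n : nat, (1 <= n)%N /\ CLn p n A y].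

Definition has_least_nbhd (p : P) : Prop :=
  forall x, exists Umin, type_nbhd p x Umin /\
    (forall U, type_nbhd p x U -> Umin `<=` U).

Definition p_symmetric (p : P) : Prop :=
  forall x y, (exists U, type_nbhd p x U /\ ~ U y) ->
    exists V, type_nbhd p y V /\ ~ V x.

Definition type_connected (p : P) (A : set X) : Prop :=
  ~ exists (I J : Type) (xi : I -> X) (Ui : I -> set X)
           (xj : J -> X) (Uj : J -> set X),
      inhabited I /\ inhabited J /\
      (forall i, type_nbhd p (xi i) (Ui i)) /\
      (forall j, type_nbhd p (xj j) (Uj j)) /\
      A = range xi `|` range xj /\
      (\bigcup_i Ui i) `&` (\bigcup_j Uj j) = set0.

Definition type_component (p : P) (x : X) : set X :=
  [set y | exists A, type_connected p A /\ A x /\ A y].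

End Typed.

From HB Require Import structures.
From mathcomp Require Import all_boot all_order.
From mathcomp Require Import all_classical topology.
Set Implicit Arguments. Unset Strict Implicit.
Local Open Scope classical_set_scope.

(** Since [sigma_x] reflects inclusion, [x] has at most one type-[p]
    neighbourhood, so with least neighbourhoods every [x] has exactly one,
    [U x].  Then [CL1 A] adds to [A] the points [b] with [U b] meeting [A],
    i.e. it is one step of the relation "[a] lies in [U b]"; [p]-symmetry
    makes this relation symmetric, so [tr [set x]] is the class of [x] for the
    equivalence relation it generates.  A class cannot be split into two
    families with disjoint neighbourhoods, as any link between the parts is a
    point of [U b] lying in the other part; conversely a set meeting two
    classes splits along them, since neighbourhoods of points in different
    classes are disjoint. *)

Section TypedClosure.
Context {d : Order.disp_t} {X : topologicalType} {P : porderType d}.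
Variables (sigma : X -> set X -> option P) (p : P).
Hypothesis typed : typed_space sigma.
Hypothesis symmetric : p_symmetric sigma p.
Hypothesis least : has_least_nbhd sigma p.

Lemma type_nbhd_uniq x U V :
  type_nbhd sigma p x U -> type_nbhd sigma p x V -> U = V.
Proof.
case: typed => _ reflect_le xU xV; apply/seteqP; split.
- exact: (reflect_le _ _ _ _ _ xU xV).1 (Order.POrderTheory.lexx p).
- exact: (reflect_le _ _ _ _ _ xV xU).1 (Order.POrderTheory.lexx p).
Qed.

Lemma type_nbhd_self x U : type_nbhd sigma p x U -> U x.
Proof. by case: typed => open_mem _ /open_mem[]. Qed.

Definition p_linked (a b : X) : Prop :=
  exists U, type_nbhd sigma p b U /\ U a.

Lemma p_linked_sym a b : p_linked a b -> p_linked b a.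
Proof.
move=> [U [bU Ua]]; have [V [aV _]] := least a; exists V; split => //.
apply: contrapT => Vb.
have /symmetric[W [bW Wa]] : exists W, type_nbhd sigma p a W /\ ~ W b by exists V.
by rewrite (type_nbhd_uniq bW bU) in Wa.
Qed.

Lemma CL1E A b : CL1 sigma p A b <-> A b \/ exists2 a, A a & p_linked a b.
Proof.
split=> [[Ab|acc_b]|[Ab|[a Aa [U [bU Ua]]]]]; [by left | right | by left | right].
- have [U [bU _]] := least b; have [a [Ua Aa]] := acc_b U bU.
  by exists a => //; exists U.
- by move=> V bV; rewrite -(type_nbhd_uniq bU bV); exists a.
Qed.

Lemma CL1_set1 x y : CL1 sigma p [set x] y <-> x = y \/ p_linked x y.
Proof.
rewrite CL1E; split=> [[->|[a -> xy]]|[->|xy]]; by [left | right | right; exists x].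
Qed.

Lemma CL1_set1_sym x y : CL1 sigma p [set x] y <-> CL1 sigma p [set y] x.
Proof.
by rewrite !CL1_set1; split=> -[->|/p_linked_sym]; by [left | right].
Qed.

Lemma sub_tr A : A `<=` tr sigma p A.
Proof. by move=> a Aa; exists 1%N; split => //; left. Qed.

Lemma tr_linked A a b : tr sigma p A a -> p_linked a b -> tr sigma p A b.
Proof. by move=> [n [_ An]] ab; exists n.+1; split => //; apply/CL1E; right; exists a. Qed.

Lemma tr_min A S : A `<=` S -> (forall a b, S a -> p_linked a b -> S b) ->
  tr sigma p A `<=` S.
Proof.
move=> AS S_linked y [n [_]]; elim: n y => [|n IHn] y /=; first exact: AS.
by move/CL1E => [/IHn|[a /IHn Sa ay]] //; apply: S_linked ay.
Qed.

Lemma tr1_subset x y : tr sigma p [set x] y -> tr sigma p [set y] `<=` tr sigma p [set x].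
Proof. by move=> xy; apply: tr_min => [z ->|]; last exact: tr_linked. Qed.

Lemma tr1_sym x y : tr sigma p [set x] y -> tr sigma p [set y] x.
Proof.
apply: (tr_min (S := fun z => tr sigma p [set z] x)) => [z ->|a b ax ab].
  exact: sub_tr.
apply: tr1_subset ax; apply: tr_linked (p_linked_sym ab); exact: sub_tr.
Qed.

Lemma tr1_eq x y : tr sigma p [set x] y -> tr sigma p [set x] = tr sigma p [set y].
Proof.
by move=> xy; apply/seteqP; split; apply: tr1_subset => //; apply: tr1_sym.
Qed.

Lemma tr1_nbhd_disjoint x a b U V : tr sigma p [set x] a -> ~ tr sigma p [set x] b ->
  type_nbhd sigma p a U -> type_nbhd sigma p b V -> U `&` V = set0.
Proof.
move=> xa xb aU bV; apply/seteqP; split => // z [Uz Vz]; apply: xb.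
have za : p_linked z a by exists U.
have zb : p_linked z b by exists V.
exact: tr_linked (tr_linked xa (p_linked_sym za)) zb.
Qed.

Lemma separated_not_type_connected (A B : set X) : A !=set0 -> B !=set0 ->
  (forall a b U V, A a -> B b ->
     type_nbhd sigma p a U -> type_nbhd sigma p b V -> U `&` V = set0) ->
  ~ type_connected sigma p (A `|` B).
Proof.
move=> [a0 Aa0] [b0 Bb0] sep; apply => /=.
pose I := {aU : X * set X | A aU.1 /\ type_nbhd sigma p aU.1 aU.2}.
pose J := {bV : X * set X | B bV.1 /\ type_nbhd sigma p bV.1 bV.2}.
have mem_range (C : set X) c :
    C c -> range (fun k : {cU : X * set X | C cU.1 /\ type_nbhd sigma p cU.1 cU.2}
                   => (sval k).1) c.
  by move=> Cc; have [U [cU _]] := least c; exists (exist _ (c, U) (conj Cc cU)).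
exists I, J, (fun i : I => (sval i).1), (fun i : I => (sval i).2),
  (fun j : J => (sval j).1), (fun j : J => (sval j).2).
split; first by have [U [a0U _]] := least a0; constructor; exists (a0, U).
split; first by have [V [b0V _]] := least b0; constructor; exists (b0, V).
split; first by move=> k; exact: (proj2_sig k).2.
split; first by move=> k; exact: (proj2_sig k).2.
split.
  apply/seteqP; split=> c.
  - by case=> Cc; [left | right]; apply: mem_range.
  - by case=> -[k _ <-]; [left | right]; exact: (proj2_sig k).1.
apply/seteqP; split => // z [[[[a U] /= [Aa aU]] _ Uz] [[[b V] /= [Bb bV]] _ Vz]].
by have : (U `&` V) z by []; rewrite (sep a b U V).
Qed.

Lemma tr1_type_connected x : type_connected sigma p (tr sigma p [set x]).
Proof.
move=> [I [J [xi [Ui [xj [Uj [[i0] [[j0] [xiU [xjU [trE disj]]]]]]]]]]].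
pose L := \bigcup_i Ui i.
(* [type_connected] states disjointness with the lattice meet of [set X]. *)
have not_L_xj j z : Uj j z -> ~ L z.
  move=> Ujz Lz; have : (\bigcup_i Ui i `&` \bigcup_j Uj j)%O z by split => //; exists j.
  by rewrite disj.
have xi_tr i : tr sigma p [set x] (xi i) by rewrite trE; left; exists i.
have xi0_closure : tr sigma p [set xi i0] `<=` tr sigma p [set x] `&` L.
  apply: tr_min => [z ->|a b [xa La] ab].
    by split; [exact: xi_tr | exists i0 => //; apply: type_nbhd_self].
  have xb := tr_linked xa ab; split => //.
  move: xb; rewrite trE => -[[i _ <-]|[j _ jb]].
    by exists i => //; apply: type_nbhd_self.
  move: ab => [U [bU Ua]]; rewrite -jb in bU.
  by case: (not_L_xj j a _ La); rewrite -(type_nbhd_uniq bU (xjU j)).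
have [_] : (tr sigma p [set x] `&` L) (xj j0).
  by apply: xi0_closure; rewrite -(tr1_eq (xi_tr i0)) trE; right; exists j0.
by apply: not_L_xj; apply: type_nbhd_self.
Qed.

Lemma type_component_tr1 x : type_component sigma p x = tr sigma p [set x].
Proof.
apply/seteqP; split=> [y [A [A_conn [Ax Ay]]]|y xy].
- apply: contrapT => xy; move: A_conn.
  rewrite -[A]setIT -(setUv (tr sigma p [set x])) setIUr.
  apply: separated_not_type_connected.
  + by exists x; split => //; apply: sub_tr.
  + by exists y.
  + by move=> a b U V [_ xa] [_ xb]; exact: tr1_nbhd_disjoint xa xb.
- exists (tr sigma p [set x]); split; first exact: tr1_type_connected.
  by split => //; apply: sub_tr.
Qed.

End TypedClosure.

Theorem theorem2p18 (d : Order.disp_t) (X : topologicalType) (P : porderType d)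
    (sigma : X -> set X -> option P) (p : P) :
  typed_space sigma -> p_symmetric sigma p -> has_least_nbhd sigma p ->
  forall x : X,
    (forall y : X, CL1 sigma p [set x] y <-> CL1 sigma p [set y] x) /\
    type_component sigma p x = tr sigma p [set x] /\
    (forall y : X, tr sigma p [set x] y -> tr sigma p [set x] = tr sigma p [set y]).
Proof.
move=> typed symmetric least x; split; last split.
- exact: CL1_set1_sym.
- exact: type_component_tr1.
- exact: tr1_eq.
Qed.
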